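(* Let $\rho_{AB}$ be positive semidefinite on $\mathcal{H}_A\otimes\mathcal{H}_B$ with $0<\operatorname{tr}\rho_{AB}\le1$. Then $$\hat H_{\min}(A|B)_\rho\le H_{\min}(A|B)_\rho-\log\frac{1}{\operatorname{tr}\rho_{AB}}.$$
   Context: Hilbert spaces are finite-dimensional; $\log$ is binary. $D_{\max}(\rho\|\tau)=\inf\{\lambda\in\mathbb{R}:\rho\le2^\lambda\tau\}$. $H_{\min}(A|B)_\rho=\max_{\sigma_B}-D_{\max}(\rho_{AB}\|\mathbb{1}_A\otimes\sigma_B)$, max over normalized density operators $\sigma_B$; $\hat H_{\min}(A|B)_\rho=-D_{\max}(\rho_{AB}\|\mathbb{1}_A\otimes\rho_B)$ with $\rho_B=\operatorname{tr}_A\rho_{AB}$. *)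

From HB Require Import structures.
From mathcomp Require Import all_boot all_order all_algebra.
From mathcomp Require Import complex mxtens.
From mathcomp Require Import classical_sets reals ereal exp.
Set Implicit Arguments. Unset Strict Implicit. Unset Printing Implicit Defensive.
Import Order.TTheory GRing.Theory Num.Theory.
Local Open Scope ring_scope.

Section Quantum.
Variable R : realType.
Local Notation C := (R[i]).

Definition cR (x : R) : C := (x%:C)%C.

Definition adjmx m n (A : 'M[C]_(m, n)) : 'M[C]_(n, m) :=
  \matrix_(i, j) ((A j i)^*)%C.

Definition psd n (A : 'M[C]_n) : Prop :=
  adjmx A = A /\ forall v : 'cV[C]_n, 0 <= (adjmx v *m A *m v) 0 0.

Definition loewner n (A B : 'M[C]_n) : Prop := psd (B - A).

Definition density n (s : 'M[C]_n) : Prop := psd s /\ \tr s = 1.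

Definition ptraceA dA dB (rho : 'M[C]_(dA * dB)) : 'M[C]_dB :=
  \matrix_(i, j) \sum_(k < dA) rho (mxtens_index (k, i)) (mxtens_index (k, j)).

Definition log2 (x : R) : R := ln x / ln 2.

(* D_max(rho||tau) = inf { lambda in R : rho <= 2^lambda tau }  (in \bar R,
   +oo when the set is empty) *)
Definition Dmax n (rho tau : 'M[C]_n) : \bar R :=
  ereal_inf [set (lam%:E)%E | lam in [set lam : R | loewner rho (cR (2 `^ lam) *: tau)]]%classic.

Definition Hmin dA dB (rho : 'M[C]_(dA * dB)) : \bar R :=
  ereal_sup [set (- Dmax rho (1%:M *t sigma))%E | sigma in [set sigma : 'M[C]_dB | density sigma]]%classic.

Definition Hmin_hat dA dB (rho : 'M[C]_(dA * dB)) : \bar R :=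
  (- Dmax rho (1%:M *t ptraceA rho))%E.

End Quantum.

From mathcomp Require Import all_boot all_order all_algebra.
From mathcomp Require Import complex mxtens.
From mathcomp Require Import classical_sets reals ereal exp.
Set Implicit Arguments. Unset Strict Implicit. Unset Printing Implicit Defensive.
Import Order.TTheory GRing.Theory Num.Theory.
Local Open Scope ring_scope.
Local Open Scope complex_scope.

(* The normalized reduced operator sigma_B = rho_B / tr rho is a density
   operator, and rho <= 2^lam (1 (x) rho_B) is the same as
   rho <= 2^(lam + log tr rho) (1 (x) sigma_B).  Hence
   D_max(rho || 1 (x) sigma_B) <= D_max(rho || 1 (x) rho_B) + log tr rho, while
   -D_max(rho || 1 (x) sigma_B) <= H_min(A|B) since sigma_B competes in the
   maximization. *)

Section Operators.
Variable R : realType.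
Local Notation C := (R[i]).

Lemma cRM (x y : R) : cR x * cR y = cR (x * y).
Proof. by rewrite /cR -rmorphM. Qed.

Lemma quad_formE n (A : 'M[C]_n) (v : 'cV[C]_n) :
  (adjmx v *m A *m v) 0 0 = \sum_i \sum_j (v i 0)^* * A i j * v j 0.
Proof.
rewrite mxE; under eq_bigr do rewrite mxE mulr_suml.
rewrite exchange_big; apply: eq_bigr => i _; apply: eq_bigr => j _.
by rewrite !mxE.
Qed.

Lemma big_mxtens_index m n (F : 'I_(m * n) -> C) :
  \sum_i F i = \sum_(a < m) \sum_(b < n) F (mxtens_index (a, b)).
Proof.
rewrite pair_big (reindex (@mxtens_index m n)) /=; first by apply: eq_bigr => -[].
by exists (@mxtens_unindex m n) => x _; [rewrite mxtens_indexK | rewrite mxtens_unindexK].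
Qed.

Lemma psd_diag_ge0 n (A : 'M[C]_n) i : psd A -> 0 <= A i i.
Proof.
move=> [_ /(_ (delta_mx i 0))].
have -> : adjmx (delta_mx i 0 : 'cV[C]_n) = delta_mx 0 i.
  by apply/matrixP => a b; rewrite !mxE conjc_nat andbC.
by rewrite -(rowE i A) -colE !mxE.
Qed.

Lemma psd_mxtrace_real n (A : 'M[C]_n) : psd A -> \tr A = cR (complex.Re (\tr A)).
Proof.
move=> psdA; have : 0 <= \tr A by apply: sumr_ge0 => i _; apply: psd_diag_ge0.
by move/ger0_Im; case: (\tr A) => a b /= ->.
Qed.

Lemma psdZ n (c : R) (A : 'M[C]_n) : 0 <= c -> psd A -> psd (cR c *: A).
Proof.
move=> c_ge0 [hermA quadA]; split.
  apply/matrixP => i j; rewrite !mxE rmorphM; congr (_ * _).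
    exact: conjc_real.
  by rewrite -[in RHS]hermA mxE.
by move=> v; rewrite -scalemxAr -scalemxAl mxE mulr_ge0 // /cR ler0c.
Qed.

Lemma mxtens1Z dA dB (c : C) (M : 'M[C]_dB) :
  (1%:M : 'M[C]_dA) *t (c *: M) = c *: ((1%:M : 'M[C]_dA) *t M).
Proof.
apply/matrixP => i j.
case: (mxtens_indexP i) => a b; case: (mxtens_indexP j) => a' b'.
by rewrite !mxE !mxtens_indexK /= mulrCA.
Qed.

Section PartialTrace.
Variables dA dB : nat.
Implicit Type rho : 'M[C]_(dA * dB).

Lemma mxtrace_ptraceA rho : \tr (ptraceA rho) = \tr rho.
Proof.
rewrite /mxtrace big_mxtens_index exchange_big.
by apply: eq_bigr => i _; rewrite mxE.
Qed.

Lemma adjmx_ptraceA rho : adjmx rho = rho -> adjmx (ptraceA rho) = ptraceA rho.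
Proof.
move=> hermR; apply/matrixP => i j; rewrite !mxE rmorph_sum.
by apply: eq_bigr => k _; rewrite -[in RHS]hermR mxE.
Qed.

(* The vector e_k (x) v of H_A (x) H_B. *)
Definition ket_tensA (k : 'I_dA) (v : 'cV[C]_dB) : 'cV[C]_(dA * dB) :=
  \col_x (if (mxtens_unindex x).1 == k then v (mxtens_unindex x).2 0 else 0).

Lemma quad_form_ketA rho k v :
  (adjmx (ket_tensA k v) *m rho *m ket_tensA k v) 0 0 =
  \sum_j \sum_l (v j 0)^* * rho (mxtens_index (k, j)) (mxtens_index (k, l)) * v l 0.
Proof.
rewrite quad_formE big_mxtens_index (bigD1 k) //= [X in _ + X]big1 ?addr0; last first.
  move=> a /negbTE ak; apply: big1 => j _; rewrite big_mxtens_index.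
  by apply: big1 => c _; apply: big1 => l _; rewrite !mxE !mxtens_indexK /= ak raddf0 !mul0r.
apply: eq_bigr => j _; rewrite big_mxtens_index (bigD1 k) //= [X in _ + X]big1 ?addr0.
  by apply: eq_bigr => l _; rewrite !mxE !mxtens_indexK /= !eqxx.
by move=> c /negbTE ck; apply: big1 => l _; rewrite !mxE !mxtens_indexK /= ck mulr0.
Qed.

Lemma quad_form_ptraceA rho v :
  (adjmx v *m ptraceA rho *m v) 0 0 =
  \sum_k (adjmx (ket_tensA k v) *m rho *m ket_tensA k v) 0 0.
Proof.
under [RHS]eq_bigr do rewrite quad_form_ketA.
rewrite quad_formE [RHS]exchange_big; apply: eq_bigr => j _.
rewrite [RHS]exchange_big; apply: eq_bigr => l _.
by rewrite mxE mulr_sumr mulr_suml.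
Qed.

Lemma psd_ptraceA rho : psd rho -> psd (ptraceA rho).
Proof.
move=> [hermR quadR]; split; first exact: adjmx_ptraceA.
by move=> v; rewrite quad_form_ptraceA sumr_ge0.
Qed.

Lemma density_normalized_ptraceA rho :
  psd rho -> 0 < complex.Re (\tr rho) ->
  density (cR (complex.Re (\tr rho))^-1 *: ptraceA rho).
Proof.
move=> psdR tr_gt0; split; first by apply: psdZ; [rewrite invr_ge0 ltW | exact: psd_ptraceA].
by rewrite mxtraceZ mxtrace_ptraceA [\tr rho]psd_mxtrace_real // cRM mulVf ?gt_eqF.
Qed.

End PartialTrace.

Lemma powR2_log2 (x : R) : 0 < x -> 2 `^ log2 x = x.
Proof.
move=> x_gt0; rewrite /powR ifN ?pnatr_eq0 // /log2 mulfVK ?lnK ?posrE //.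
by rewrite gt_eqF // ln_gt0 // ltr1n.
Qed.

Lemma log2_div1r (x : R) : 0 < x -> log2 (1 / x) = - log2 x.
Proof. by move=> x_gt0; rewrite /log2 div1r lnV ?posrE // mulNr. Qed.

Lemma Dmax_scale n (rho tau : 'M[C]_n) (c : R) : 0 < c ->
  (Dmax rho tau - (log2 c)%:E <= Dmax rho (cR c *: tau))%E.
Proof.
move=> c_gt0; apply/ereal_infP => _ [lam rho_le <-].
have scale : cR (2 `^ (lam + log2 c)) *: tau = cR (2 `^ lam) *: (cR c *: tau).
  rewrite scalerA cRM powRD ?powR2_log2 //.
  by apply/implyP; rewrite pnatr_eq0.
rewrite leeBlDr // -EFinD; apply: ereal_inf_lbound.
by exists (lam + log2 c); first rewrite /mkset scale.
Qed.

Lemma Dmax_density_le_Hmin dA dB (rho : 'M[C]_(dA * dB)) (sigma : 'M[C]_dB) :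
  density sigma -> (- Dmax rho (1%:M *t sigma) <= Hmin rho)%E.
Proof. by move=> dens_sigma; apply: ereal_sup_ubound; exists sigma. Qed.

End Operators.

Theorem lemma14 (R : realType) (dA dB : nat) (rho : 'M[R[i]]_(dA * dB)) :
  psd rho ->
  0 < complex.Re (\tr rho) -> complex.Re (\tr rho) <= 1 ->
  (Hmin_hat rho <= Hmin rho - (log2 (1 / complex.Re (\tr rho)))%:E)%E.
Proof.
move=> psdR tr_gt0 _; set t := complex.Re (\tr rho).
pose sigma := cR t^-1 *: ptraceA rho.
have rhoB_sigma : ptraceA rho = cR t *: sigma.
  by rewrite scalerA cRM mulfV ?gt_eqF // scale1r.
have Dmax_shift : (Dmax rho (1%:M *t sigma) - (log2 t)%:E <=
                   Dmax rho (1%:M *t ptraceA rho))%E.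
  by have := Dmax_scale rho (1%:M *t sigma) tr_gt0; rewrite -mxtens1Z -rhoB_sigma.
have Hmin_ge := Dmax_density_le_Hmin rho (density_normalized_ptraceA psdR tr_gt0).
rewrite log2_div1r // EFinN oppeK /Hmin_hat.
apply: le_trans (leeD2r (log2 t)%:E Hmin_ge).
by rewrite -fin_num_oppeB // leeN2.
Qed.
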